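(* Let $n\ge 1$ and let $F(z)=\sum_{k=1}^\infty b_k z^k$ be an extremal function for the problem $$ M_n=\sup\Big\{ \sum_{k=1}^n k|c_k|^2 \,:\, \|f\|_{\mathcal{B}}\le 1,\ f(z)=\sum_{k=1}^\infty c_k z^k\Big\}, $$ i.e. $\|F\|_{\mathcal{B}}\le 1$ and $\sum_{k=1}^n k|b_k|^2=M_n$. Then $b_n b_{n+1}=0$, i.e. $b_n=0$ or $b_{n+1}=0$.
   Context: $\mathbb{D}$ is the open unit disc. The Bloch space $\mathcal{B}$ consists of analytic functions $f$ on $\mathbb{D}$ with finite norm $\|f\|_{\mathcal{B}}=|f(0)|+\sup_{z\in\mathbb{D}}(1-|z|^2)|f'(z)|$. *)

From Stdlib Require Import Reals.
From Coquelicot Require Import Coquelicot.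
Open Scope R_scope.

(* Sum of a complex series, componentwise (meaningful when it converges). *)
Definition Cseries (a : nat -> C) : C :=
  (Series (fun k => fst (a k)), Series (fun k => snd (a k))).

(* An analytic function on the unit disc D, given by its Taylor coefficients
   c : f(z) = sum_k c_k z^k, the series converging (absolutely) on D,
   i.e. radius of convergence >= 1. *)
Definition analytic_on_disc (c : nat -> C) : Prop :=
  forall z : C, Cmod z < 1 -> ex_series (fun k => Cmod ((c k * pow_n z k)%C)).

Definition fval (c : nat -> C) (z : C) : C := Cseries (fun k => (c k * pow_n z k)%C).
Definition fderiv (c : nat -> C) (z : C) : C :=
  Cseries (fun k => (RtoC (INR k) * c k * pow_n z (k - 1))%C).

Definition bloch_norm (c : nat -> C) : Rbar :=
  Rbar_plus (Cmod (c 0%nat))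
    (Lub_Rbar (fun r => exists z : C, Cmod z < 1 /\
                 r = (1 - Cmod z ^ 2) * Cmod (fderiv c z))).

Definition admissible (c : nat -> C) : Prop :=
  analytic_on_disc c /\ c 0%nat = RtoC 0 /\ Rbar_le (bloch_norm c) 1.

(* sum_{k=1}^n k |c_k|^2  (the k = 0 term vanishes) *)
Definition partial_energy (n : nat) (c : nat -> C) : R :=
  sum_n (fun k => INR k * Cmod (c k) ^ 2) n.

Definition M (n : nat) : Rbar :=
  Lub_Rbar (fun r => exists c, admissible c /\ r = partial_energy n c).

From Stdlib Require Import Reals Lra Lia.
From Coquelicot Require Import Coquelicot.
Open Scope R_scope.

(* Let [f = sum_k b_k z^k] be extremal with energy [E], let [|om| = 1] and [0 < r < 1]. The
   dilation [z |-> f (r om z)], truncated at a high degree [N] and divided by [1 + eps] (with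
   [eps -> 0] as [N -> oo]), is a polynomial [p] whose Bloch seminorm is at most 1. Since
   [(1 - |z|^2) |phi_t'(z)| = 1 - |phi_t(z)|^2] for the disc automorphism
   [phi_t z = (z + t) / (1 + t z)], the function [p o phi_t - p t] is again admissible. To first
   order in [t] its [j]-th coefficient is [c_j + t ((j + 1) c_(j+1) - (j - 1) c_(j-1))], and the
   first variation of [sum_(j <= n) j |c_j|^2] telescopes to [2 t n (n + 1) Re (c_n conj c_(n+1))];
   the second-order remainder is [O(t^2)] uniformly in [r] and [N]. Extremality therefore gives
   [r^(2n) E + 2 t r^(2n+1) X <= E + K t^2] with
   [X = n (n + 1) Re (b_n om^n conj (b_(n+1) om^(n+1)))]. Letting [N -> oo] and [r -> 1] yields
   [2 t X <= K t^2] for all small [t], hence [X = 0]. The choices [om = 1] and [om = i] then give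
   [b_n conj b_(n+1) = 0]. *)

(* Goals about [C] are often displayed at type [R * R], for which [ring] knows no structure. *)
Ltac Cring := match goal with |- ?a = ?b => change (@eq C a b) end; ring.
Ltac Cfield := match goal with |- ?a = ?b => change (@eq C a b) end; field.

(** * Absolutely convergent complex series *)

Lemma pow_n_Cpow (z : C) k : pow_n z k = Cpow z k.
Proof. induction k as [|k IH]; simpl; [reflexivity | now rewrite IH]. Qed.

Lemma Rabs_snd_le_Cmod (x : C) : Rabs (snd x) <= Cmod x.
Proof.
  destruct x as [a b]. unfold Cmod; simpl. rewrite <- sqrt_Rsqr_abs.
  apply sqrt_le_1_alt. unfold Rsqr. nra.
Qed.

Lemma Cmod_le_Rabs_fst_snd (x : C) : Cmod x <= Rabs (fst x) + Rabs (snd x).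
Proof.
  destruct x as [a b]. unfold Cmod; simpl.
  assert (Ha := Rabs_pos a). assert (Hb := Rabs_pos b).
  rewrite <- (sqrt_Rsqr (Rabs a + Rabs b)) by lra.
  apply sqrt_le_1_alt. unfold Rsqr.
  assert (a * a = Rabs a * Rabs a) by (rewrite <- Rabs_mult, Rabs_pos_eq; nra).
  assert (b * b = Rabs b * Rabs b) by (rewrite <- Rabs_mult, Rabs_pos_eq; nra).
  nra.
Qed.

Lemma ex_series_Rabs_le (a w : nat -> R) :
  (forall k, Rabs (a k) <= w k) -> ex_series w -> ex_series a.
Proof. intros Haw Hw. exact (@ex_series_le R_AbsRing R_CompleteNormedModule a w Haw Hw). Qed.

Definition Csummable (u : nat -> C) : Prop := ex_series (fun k => Cmod (u k)).

Lemma Csummable_le u (w : nat -> R) : (forall k, Cmod (u k) <= w k) -> ex_series w -> Csummable u.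
Proof.
  intros Huw. apply ex_series_Rabs_le. intros k.
  rewrite Rabs_pos_eq by apply Cmod_ge_0. apply Huw.
Qed.

Lemma Csummable_Rabs_fst u : Csummable u -> ex_series (fun k => Rabs (fst (u k))).
Proof. apply ex_series_Rabs_le. intros k. rewrite Rabs_Rabsolu. apply re_le_Cmod. Qed.

Lemma Csummable_Rabs_snd u : Csummable u -> ex_series (fun k => Rabs (snd (u k))).
Proof. apply ex_series_Rabs_le. intros k. rewrite Rabs_Rabsolu. apply Rabs_snd_le_Cmod. Qed.

Lemma Csummable_fst u : Csummable u -> ex_series (fun k => fst (u k)).
Proof. intros Hu. apply ex_series_Rabs, Csummable_Rabs_fst, Hu. Qed.

Lemma Csummable_snd u : Csummable u -> ex_series (fun k => snd (u k)).
Proof. intros Hu. apply ex_series_Rabs, Csummable_Rabs_snd, Hu. Qed.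

Lemma Csummable_ext u v : (forall k, u k = v k) -> Csummable u -> Csummable v.
Proof. intros Huv Hu. apply (Csummable_le _ _ (fun k => Req_le _ _ (f_equal Cmod (eq_sym (Huv k)))) Hu). Qed.

Lemma Csummable_plus u v : Csummable u -> Csummable v -> Csummable (fun k => (u k + v k)%C).
Proof.
  intros Hu Hv. apply (Csummable_le _ (fun k => Cmod (u k) + Cmod (v k))).
  - intros k. apply Cmod_triangle.
  - apply (ex_series_plus _ _ Hu Hv).
Qed.

Lemma Csummable_scal c u : Csummable u -> Csummable (fun k => (c * u k)%C).
Proof.
  intros Hu. apply (Csummable_le _ (fun k => Cmod c * Cmod (u k))).
  - intros k. rewrite Cmod_mult. lra.
  - apply (ex_series_scal_l (Cmod c) _ Hu).
Qed.

Lemma Cseries_ext u v : (forall k, u k = v k) -> Cseries u = Cseries v.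
Proof. intros Huv. unfold Cseries. f_equal; apply Series_ext; intros k; now rewrite Huv. Qed.

Lemma Cseries_plus u v : Csummable u -> Csummable v ->
  Cseries (fun k => (u k + v k)%C) = (Cseries u + Cseries v)%C.
Proof.
  intros Hu Hv. unfold Cseries. apply injective_projections; simpl.
  - rewrite <- Series_plus by (apply Csummable_fst; auto). now apply Series_ext.
  - rewrite <- Series_plus by (apply Csummable_snd; auto). now apply Series_ext.
Qed.

Lemma Cseries_scal c u : Csummable u -> Cseries (fun k => (c * u k)%C) = (c * Cseries u)%C.
Proof.
  intros Hu. unfold Cseries. destruct c as [c1 c2].
  assert (H1 := Csummable_fst _ Hu). assert (H2 := Csummable_snd _ Hu).
  apply injective_projections; simpl; rewrite <- !Series_scal_l.
  - rewrite <- Series_minus; [now apply Series_ext | |].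
    + apply (ex_series_scal_l c1 _ H1).
    + apply (ex_series_scal_l c2 _ H2).
  - rewrite <- Series_plus; [now apply Series_ext | |].
    + apply (ex_series_scal_l c1 _ H2).
    + apply (ex_series_scal_l c2 _ H1).
Qed.

Lemma Cseries_incr_1 u : Csummable u -> Cseries u = (u 0%nat + Cseries (fun k => u (S k)))%C.
Proof.
  intros Hu. unfold Cseries. apply injective_projections; simpl.
  - rewrite (Series_incr_1 (fun k => fst (u k))) by (apply Csummable_fst; auto). reflexivity.
  - rewrite (Series_incr_1 (fun k => snd (u k))) by (apply Csummable_snd; auto). reflexivity.
Qed.

Lemma Cseries_zero u : (forall k, u k = RtoC 0) -> Cseries u = RtoC 0.
Proof.
  intros Hu. unfold Cseries.
  rewrite (Series_ext _ (fun _ => 0 * 0)), (Series_ext (fun k => snd (u k)) (fun _ => 0 * 0)),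
    Series_scal_l by (intros k; rewrite Hu; simpl; ring).
  apply injective_projections; simpl; ring.
Qed.

Lemma fst_sum_n (u : nat -> C) N : fst (sum_n u N) = sum_n (fun k => fst (u k)) N.
Proof. induction N as [|N IH]; [now rewrite !sum_O | rewrite !sum_Sn; simpl; now rewrite <- IH]. Qed.

Lemma snd_sum_n (u : nat -> C) N : snd (sum_n u N) = sum_n (fun k => snd (u k)) N.
Proof. induction N as [|N IH]; [now rewrite !sum_O | rewrite !sum_Sn; simpl; now rewrite <- IH]. Qed.

Lemma RtoC_sum_n (f : nat -> R) N : RtoC (sum_n f N) = sum_n (fun k => RtoC (f k)) N.
Proof.
  induction N as [|N IH]; [now rewrite !sum_O|].
  rewrite !sum_Sn, <- IH. apply RtoC_plus.
Qed.

Lemma sum_n_Cmult_l (u : nat -> C) (c : C) N : sum_n (fun k => (c * u k)%C) N = (c * sum_n u N)%C.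
Proof. exact (@sum_n_mult_l C_Ring c u N). Qed.

Lemma sum_n_Cmult_r (u : nat -> C) (c : C) N : sum_n (fun k => (u k * c)%C) N = (sum_n u N * c)%C.
Proof. exact (@sum_n_mult_r C_Ring c u N). Qed.

Lemma Cmod_sum_n_le (u : nat -> C) N : Cmod (sum_n u N) <= sum_n (fun k => Cmod (u k)) N.
Proof.
  induction N as [|N IH]; [rewrite !sum_O; lra|].
  rewrite !sum_Sn. eapply Rle_trans; [apply Cmod_triangle|].
  change (plus ?a ?b) with (a + b). lra.
Qed.

Lemma Series_nonneg (a : nat -> R) : (forall k, 0 <= a k) -> ex_series a -> 0 <= Series a.
Proof.
  intros Ha Hex. replace 0 with (Series (fun k => 0 * a k)) by (rewrite Series_scal_l; ring).
  apply Series_le; auto. intros k. generalize (Ha k). split; lra.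
Qed.

Lemma Series_minus_sum_n (a : nat -> R) N : ex_series a ->
  Series a - sum_n a N = Series (fun k => a (S N + k)%nat).
Proof.
  intros Ha. rewrite (Series_incr_n a (S N)) by (auto; lia). simpl.
  rewrite sum_n_Reals. ring.
Qed.

Lemma sum_n_le_Series (a : nat -> R) N : (forall k, 0 <= a k) -> ex_series a -> sum_n a N <= Series a.
Proof.
  intros Ha Hex. enough (0 <= Series a - sum_n a N) by lra.
  rewrite Series_minus_sum_n by auto.
  apply Series_nonneg; [auto | apply (ex_series_incr_n a (S N)); auto].
Qed.

Lemma le_Series (a : nat -> R) N : (forall k, 0 <= a k) -> ex_series a -> a N <= Series a.
Proof.
  intros Ha Hex. eapply Rle_trans; [|apply (sum_n_le_Series a N); auto].
  destruct N as [|N]; [rewrite sum_O; lra|].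
  rewrite sum_Sn. change (plus ?x ?y) with (x + y).
  enough (0 <= sum_n a N) by lra.
  rewrite sum_n_Reals. apply cond_pos_sum, Ha.
Qed.

Lemma Cmod_Cseries_minus_sum_n u N : Csummable u ->
  Cmod (Cseries u - sum_n u N) <= 2 * (Series (fun k => Cmod (u k)) - sum_n (fun k => Cmod (u k)) N).
Proof.
  intros Hu. eapply Rle_trans; [apply Cmod_le_Rabs_fst_snd|].
  change (fst (Cseries u - sum_n u N)%C) with (Series (fun k => fst (u k)) - fst (sum_n u N)).
  change (snd (Cseries u - sum_n u N)%C) with (Series (fun k => snd (u k)) - snd (sum_n u N)).
  rewrite fst_sum_n, snd_sum_n, !Series_minus_sum_n
    by (auto; apply Csummable_fst || apply Csummable_snd; auto).
  assert (Htail : ex_series (fun k => Cmod (u (S N + k)%nat)))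
    by (apply (ex_series_incr_n (fun k => Cmod (u k))); auto).
  assert (Hproj : forall f : C -> R, (forall x, Rabs (f x) <= Cmod x) ->
    Rabs (Series (fun k => f (u (S N + k)%nat))) <= Series (fun k => Cmod (u (S N + k)%nat))).
  { intros f Hf. eapply Rle_trans; [apply Series_Rabs|].
    - apply (ex_series_Rabs_le _ _ (fun k => Rle_trans _ _ _ (Req_le _ _ (Rabs_Rabsolu _)) (Hf _)) Htail).
    - apply Series_le; auto. intros k; split; auto using Rabs_pos. }
  generalize (Hproj fst re_le_Cmod) (Hproj snd Rabs_snd_le_Cmod). lra.
Qed.

Definition cprod (u v : nat -> C) (n : nat) : C := sum_n (fun k => (u k * v (n - k)%nat)%C) n.

Lemma Csummable_cprod u v : Csummable u -> Csummable v -> Csummable (cprod u v).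
Proof.
  intros Hu Hv.
  apply (Csummable_le _ (fun n => sum_f_R0 (fun k => Cmod (u k) * Cmod (v (n - k)%nat)) n)).
  - intros n. eapply Rle_trans; [apply Cmod_sum_n_le|]. rewrite sum_n_Reals.
    right. apply sum_eq. intros; apply Cmod_mult.
  - exists (Series (fun k => Cmod (u k)) * Series (fun k => Cmod (v k))).
    apply (is_series_mult_pos (fun k => Cmod (u k)) (fun k => Cmod (v k)));
      try (intros; apply Cmod_ge_0); apply Series_correct; assumption.
Qed.

Lemma Cseries_cprod u v : Csummable u -> Csummable v -> Cseries (cprod u v) = (Cseries u * Cseries v)%C.
Proof.
  intros Hu Hv.
  assert (Cauchy : forall a b : nat -> R, ex_series (fun k => Rabs (a k)) -> ex_series (fun k => Rabs (b k)) ->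
    is_series (fun n => sum_f_R0 (fun k => a k * b (n - k)%nat) n) (Series a * Series b)).
  { intros a b Ha Hb. apply is_series_mult; auto; apply Series_correct, ex_series_Rabs; auto. }
  generalize (Cauchy _ _ (Csummable_Rabs_fst _ Hu) (Csummable_Rabs_fst _ Hv))
    (Cauchy _ _ (Csummable_Rabs_snd _ Hu) (Csummable_Rabs_snd _ Hv))
    (Cauchy _ _ (Csummable_Rabs_fst _ Hu) (Csummable_Rabs_snd _ Hv))
    (Cauchy _ _ (Csummable_Rabs_snd _ Hu) (Csummable_Rabs_fst _ Hv)).
  intros H11 H22 H12 H21. unfold Cseries. apply injective_projections; apply is_series_unique.
  - eapply is_series_ext; [|apply (is_series_minus _ _ _ _ H11 H22)].
    intros n. unfold cprod. rewrite fst_sum_n, sum_n_Reals.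
    change (plus ?x (opp ?y)) with (x - y). rewrite <- minus_sum. now apply sum_eq.
  - eapply is_series_ext; [|apply (is_series_plus _ _ _ _ H12 H21)].
    intros n. unfold cprod. rewrite snd_sum_n, sum_n_Reals.
    change (plus ?x ?y) with (x + y). rewrite <- plus_sum. now apply sum_eq.
Qed.

Definition Cpseries (a : nat -> C) (z : C) : C := Cseries (fun j => (a j * Cpow z j)%C).
Definition ex_Cpseries (a : nat -> C) (z : C) : Prop := Csummable (fun j => (a j * Cpow z j)%C).

Lemma ex_Cpseries_ext a b z : (forall j, a j = b j) -> ex_Cpseries a z -> ex_Cpseries b z.
Proof. intros Hab. apply Csummable_ext. intros j. now rewrite Hab. Qed.

Lemma Cpseries_ext a b z : (forall j, a j = b j) -> Cpseries a z = Cpseries b z.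
Proof. intros Hab. apply Cseries_ext. intros j. now rewrite Hab. Qed.

Lemma ex_Cpseries_plus a b z : ex_Cpseries a z -> ex_Cpseries b z -> ex_Cpseries (fun j => (a j + b j)%C) z.
Proof.
  intros Ha Hb. eapply Csummable_ext; [|apply (Csummable_plus _ _ Ha Hb)].
  intros j. simpl. ring.
Qed.

Lemma Cpseries_plus a b z : ex_Cpseries a z -> ex_Cpseries b z ->
  Cpseries (fun j => (a j + b j)%C) z = (Cpseries a z + Cpseries b z)%C.
Proof. intros Ha Hb. unfold Cpseries. rewrite <- Cseries_plus by auto. apply Cseries_ext. intros j. ring. Qed.

Lemma ex_Cpseries_scal c a z : ex_Cpseries a z -> ex_Cpseries (fun j => (c * a j)%C) z.
Proof.
  intros Ha. eapply Csummable_ext; [|apply (Csummable_scal c _ Ha)].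
  intros j. simpl. ring.
Qed.

Lemma Cpseries_scal c a z : ex_Cpseries a z -> Cpseries (fun j => (c * a j)%C) z = (c * Cpseries a z)%C.
Proof. intros Ha. unfold Cpseries. rewrite <- Cseries_scal by auto. apply Cseries_ext. intros j. ring. Qed.

Lemma ex_Cpseries_sum_n (f : nat -> nat -> C) N z : (forall k, ex_Cpseries (f k) z) ->
  ex_Cpseries (fun j => sum_n (fun k => f k j) N) z.
Proof.
  intros Hf. induction N as [|N IH].
  - eapply ex_Cpseries_ext; [|apply (Hf 0%nat)]. intros j. now rewrite sum_O.
  - eapply ex_Cpseries_ext; [|apply (ex_Cpseries_plus _ _ _ IH (Hf (S N)))].
    intros j. now rewrite sum_Sn.
Qed.

Lemma Cpseries_sum_n (f : nat -> nat -> C) N z : (forall k, ex_Cpseries (f k) z) ->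
  Cpseries (fun j => sum_n (fun k => f k j) N) z = sum_n (fun k => Cpseries (f k) z) N.
Proof.
  intros Hf. induction N as [|N IH].
  - rewrite sum_O. apply Cpseries_ext. intros j. now rewrite sum_O.
  - rewrite sum_Sn, (Cpseries_ext _ (fun j => (sum_n (fun k => f k j) N + f (S N) j)%C))
      by (intros j; now rewrite sum_Sn).
    rewrite Cpseries_plus, IH by auto using ex_Cpseries_sum_n. reflexivity.
Qed.

Lemma cprod_Cpow a b z n :
  (cprod a b n * Cpow z n)%C = cprod (fun j => (a j * Cpow z j)%C) (fun j => (b j * Cpow z j)%C) n.
Proof.
  unfold cprod. rewrite <- sum_n_Cmult_r. apply sum_n_ext_loc. intros k Hk.
  assert (E : Cpow z n = (Cpow z k * Cpow z (n - k))%C)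
    by (rewrite <- Cpow_add_r; f_equal; lia).
  rewrite E. Cring.
Qed.

Lemma ex_Cpseries_cprod a b z : ex_Cpseries a z -> ex_Cpseries b z -> ex_Cpseries (cprod a b) z.
Proof.
  intros Ha Hb. eapply Csummable_ext; [|apply (Csummable_cprod _ _ Ha Hb)].
  intros n. now rewrite cprod_Cpow.
Qed.

Lemma Cpseries_cprod a b z : ex_Cpseries a z -> ex_Cpseries b z ->
  Cpseries (cprod a b) z = (Cpseries a z * Cpseries b z)%C.
Proof.
  intros Ha Hb. unfold Cpseries. rewrite <- Cseries_cprod by auto.
  apply Cseries_ext. intros n. apply cprod_Cpow.
Qed.

Lemma ex_Cpseries_bounded a z : (forall j, Cmod (a j) <= 1) -> Cmod z < 1 -> ex_Cpseries a z.
Proof.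
  intros Ha Hz. apply (Csummable_le _ (fun j => Cmod z ^ j)).
  - intros j. rewrite Cmod_mult, Cmod_pow.
    generalize (Ha j) (pow_le (Cmod z) j (Cmod_ge_0 z)). nra.
  - apply ex_series_geom. rewrite Rabs_pos_eq; auto using Cmod_ge_0.
Qed.

Lemma Cseries_geom (q : C) : Cmod q < 1 -> Cseries (fun j => Cpow q j) = (/ (RtoC 1 - q))%C.
Proof.
  intros Hq.
  assert (Hsum : Csummable (fun j => Cpow q j)).
  { apply (Csummable_le _ (fun j => Cmod q ^ j)); [intros j; rewrite Cmod_pow; lra|].
    apply ex_series_geom. rewrite Rabs_pos_eq; auto using Cmod_ge_0. }
  assert (Hden : (RtoC 1 - q)%C <> RtoC 0).
  { intros E. apply Ceq_minus in E. rewrite <- E, Cmod_1 in Hq. lra. }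
  set (S := Cseries (fun j => Cpow q j)).
  assert (HS : S = (RtoC 1 + q * S)%C).
  { unfold S at 1. rewrite Cseries_incr_1, (Cseries_ext _ (fun k => (q * Cpow q k)%C)) by easy.
    rewrite Cseries_scal by auto. reflexivity. }
  assert (HS' : (S * (RtoC 1 - q))%C = RtoC 1).
  { transitivity (S - q * S)%C; [Cring|]. rewrite HS at 1. Cring. }
  replace S with (S * (RtoC 1 - q) * / (RtoC 1 - q))%C by (Cfield; auto).
  rewrite HS'. Cring.
Qed.

Lemma pow_le_1 x n : 0 <= x <= 1 -> x ^ n <= 1.
Proof. intros Hx. rewrite <- (pow1 n). apply pow_incr. lra. Qed.

Lemma pow_le_decr x m n : 0 <= x <= 1 -> (m <= n)%nat -> x ^ n <= x ^ m.
Proof.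
  intros Hx Hmn. replace n with (m + (n - m))%nat by lia. rewrite pow_add.
  generalize (pow_le x m (proj1 Hx)) (pow_le_1 x (n - m) Hx) (pow_le x (n - m) (proj1 Hx)). nra.
Qed.

(** * The disc automorphisms [z |-> (z + t) / (1 + t z)] *)

Definition toC (a : nat -> R) : nat -> C := fun j => RtoC (a j).

Definition delta (m j : nat) : R := if Nat.eqb j m then 1 else 0.

Lemma delta_same m : delta m m = 1.
Proof. unfold delta. now rewrite Nat.eqb_refl. Qed.

Lemma delta_neq m j : j <> m -> delta m j = 0.
Proof. intros H. unfold delta. apply Nat.eqb_neq in H. now rewrite H. Qed.

Lemma Rabs_delta_le m j : Rabs (delta m j) <= 1.
Proof. unfold delta. destruct (Nat.eqb j m); rewrite ?Rabs_R1, ?Rabs_R0; lra. Qed.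

Definition mobius (t : R) (z : C) : C := ((z + RtoC t) / (RtoC 1 + RtoC t * z))%C.

Definition mobius_deriv (t : R) (z : C) : C :=
  (RtoC (1 - t ^ 2) / ((RtoC 1 + RtoC t * z) * (RtoC 1 + RtoC t * z)))%C.

(* [mobius t z = t + (1 - t^2) * sum_(m >= 1) (-t)^(m-1) z^m] *)
Definition mobius_coef (t : R) (m : nat) : R :=
  match m with 0%nat => t | S m' => (1 - t ^ 2) * (-t) ^ m' end.

Fixpoint mobius_pow_coef (t : R) (k : nat) : nat -> R :=
  match k with
  | 0%nat => delta 0
  | S k' => PS_mult (mobius_pow_coef t k') (mobius_coef t)
  end.

Lemma toC_PS_mult u v j : toC (PS_mult u v) j = cprod (toC u) (toC v) j.
Proof.
  unfold toC, PS_mult, cprod. rewrite <- sum_n_Reals, RtoC_sum_n.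
  apply sum_n_ext. intros k. apply RtoC_mult.
Qed.

Lemma PS_derive_mult (a b : nat -> R) j :
  PS_derive (PS_mult a b) j = PS_mult (PS_derive a) b j + PS_mult a (PS_derive b) j.
Proof.
  unfold PS_derive, PS_mult.
  transitivity (sum_f_R0 (fun k => INR k * a k * b (S j - k)%nat) (S j)
              + sum_f_R0 (fun k => INR (S j - k) * a k * b (S j - k)%nat) (S j)).
  - rewrite <- plus_sum, scal_sum. apply sum_eq. intros i Hi. rewrite minus_INR by lia. ring.
  - f_equal.
    + rewrite decomp_sum by lia. simpl pred. simpl INR at 1.
      rewrite !Rmult_0_l, Rplus_0_l. now apply sum_eq.
    + rewrite tech5, Nat.sub_diag. simpl INR at 2. rewrite !Rmult_0_l, Rplus_0_r.
      apply sum_eq. intros i Hi. replace (S j - i)%nat with (S (j - i)) by lia. ring.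
Qed.

Lemma mobius_denom_neq0 (t : R) (z : C) : Rabs t < 1 -> Cmod z < 1 -> (RtoC 1 + RtoC t * z)%C <> RtoC 0.
Proof.
  intros Ht Hz E.
  assert (E' : (RtoC t * z)%C = RtoC (-1)).
  { replace (RtoC t * z)%C with ((RtoC 1 + RtoC t * z) - RtoC 1)%C by Cring.
    rewrite E. apply injective_projections; simpl; ring. }
  apply (f_equal Cmod) in E'. rewrite Cmod_mult, !Cmod_R, (Rabs_left (-1)) in E' by lra.
  assert (Rabs t * Cmod z < 1) by (generalize (Rabs_pos t) (Cmod_ge_0 z); nra).
  lra.
Qed.

Lemma Rabs_mobius_coef_le t m : Rabs t < 1 -> Rabs (mobius_coef t m) <= 1.
Proof.
  intros Ht. destruct m as [|m]; simpl; [lra|].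
  rewrite Rabs_mult, <- RPow_abs, Rabs_Ropp.
  assert (Rabs (1 - t * (t * 1)) <= 1) by (apply Rabs_le; destruct (Rabs_def2 _ _ Ht); nra).
  assert (Rabs t ^ m <= 1) by (apply pow_le_1; split; [apply Rabs_pos | lra]).
  generalize (pow_le (Rabs t) m (Rabs_pos t)) (Rabs_pos (1 - t * (t * 1))). nra.
Qed.

Section Mobius.

Variables (t : R) (z : C).
Hypotheses (Ht : Rabs t < 1) (Hz : Cmod z < 1).

Let geom_neg := toC (fun j => (-t) ^ j).

Lemma geom_neg_Cpow j : (geom_neg j * Cpow z j)%C = Cpow (RtoC (-t) * z)%C j.
Proof. unfold geom_neg, toC. now rewrite Cpow_mult_l, RtoC_pow. Qed.

Lemma Cmod_neg_t_z : Cmod (RtoC (-t) * z)%C < 1.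
Proof. rewrite Cmod_mult, Cmod_R, Rabs_Ropp. generalize (Rabs_pos t) (Cmod_ge_0 z). nra. Qed.

Lemma ex_Cpseries_geom_neg : ex_Cpseries geom_neg z.
Proof.
  apply ex_Cpseries_bounded; auto. intros j. unfold geom_neg, toC.
  rewrite Cmod_R, <- RPow_abs, Rabs_Ropp. apply pow_le_1. split; [apply Rabs_pos | lra].
Qed.

Lemma Cpseries_geom_neg : Cpseries geom_neg z = (/ (RtoC 1 + RtoC t * z))%C.
Proof.
  unfold Cpseries. rewrite (Cseries_ext _ _ geom_neg_Cpow), Cseries_geom by apply Cmod_neg_t_z.
  f_equal. rewrite RtoC_opp. Cring.
Qed.

Lemma ex_Cpseries_mobius_coef : ex_Cpseries (toC (mobius_coef t)) z.
Proof. apply ex_Cpseries_bounded; auto. intros j. unfold toC. rewrite Cmod_R. now apply Rabs_mobius_coef_le. Qed.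

Lemma Cpseries_mobius_coef : Cpseries (toC (mobius_coef t)) z = mobius t z.
Proof.
  unfold Cpseries. rewrite Cseries_incr_1 by apply ex_Cpseries_mobius_coef.
  rewrite (Cseries_ext _ (fun k => ((RtoC (1 - t ^ 2) * z) * (geom_neg k * Cpow z k))%C)).
  - rewrite Cseries_scal by apply ex_Cpseries_geom_neg.
    fold (Cpseries geom_neg z). rewrite Cpseries_geom_neg.
    unfold mobius, toC. simpl. assert (Hn := mobius_denom_neq0 t z Ht Hz).
    rewrite !RtoC_minus, !RtoC_mult. Cfield. auto.
  - intros k. unfold geom_neg, toC. simpl. rewrite RtoC_mult. Cring.
Qed.

Lemma PS_derive_mobius_coef j :
  toC (PS_derive (mobius_coef t)) j = (RtoC (1 - t ^ 2) * cprod geom_neg geom_neg j)%C.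
Proof.
  unfold geom_neg. rewrite <- toC_PS_mult. unfold toC. rewrite <- RtoC_mult. f_equal.
  unfold PS_mult. rewrite (sum_eq _ (fun _ => (-t) ^ j)), <- sum_n_Reals, sum_n_const.
  - unfold PS_derive. simpl mobius_coef. ring.
  - intros k Hk. rewrite <- pow_add. f_equal. lia.
Qed.

Lemma ex_Cpseries_PS_derive_mobius_coef : ex_Cpseries (toC (PS_derive (mobius_coef t))) z.
Proof.
  eapply ex_Cpseries_ext; [intros j; symmetry; apply PS_derive_mobius_coef|].
  apply ex_Cpseries_scal, ex_Cpseries_cprod; apply ex_Cpseries_geom_neg.
Qed.

Lemma Cpseries_PS_derive_mobius_coef : Cpseries (toC (PS_derive (mobius_coef t))) z = mobius_deriv t z.
Proof.
  rewrite (Cpseries_ext _ _ z PS_derive_mobius_coef), Cpseries_scal, Cpseries_cprod, Cpseries_geom_neg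
    by auto using ex_Cpseries_cprod, ex_Cpseries_geom_neg.
  unfold mobius_deriv. assert (Hn := mobius_denom_neq0 t z Ht Hz). Cfield. auto.
Qed.

Lemma Cpseries_mobius_pow_coef k :
  ex_Cpseries (toC (mobius_pow_coef t k)) z /\ Cpseries (toC (mobius_pow_coef t k)) z = Cpow (mobius t z) k.
Proof.
  induction k as [|k [IHex IHval]].
  - assert (Hex : ex_Cpseries (toC (delta 0)) z).
    { apply ex_Cpseries_bounded; auto. intros j. unfold toC. rewrite Cmod_R. apply Rabs_delta_le. }
    split; [exact Hex|].
    unfold Cpseries. simpl mobius_pow_coef. rewrite Cseries_incr_1 by exact Hex.
    rewrite Cseries_zero; [unfold toC, delta; simpl; Cring|].
    intros k. unfold toC, delta. simpl. Cring.
  - assert (E : forall j,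
      toC (mobius_pow_coef t (S k)) j = cprod (toC (mobius_pow_coef t k)) (toC (mobius_coef t)) j)
      by (intros j; apply toC_PS_mult).
    split.
    + eapply ex_Cpseries_ext; [intros j; symmetry; apply E|].
      apply ex_Cpseries_cprod; auto using ex_Cpseries_mobius_coef.
    + rewrite (Cpseries_ext _ _ z E), Cpseries_cprod, IHval, Cpseries_mobius_coef
        by auto using ex_Cpseries_mobius_coef.
      simpl. Cring.
Qed.

Lemma Cpseries_PS_derive_mobius_pow_coef k :
  ex_Cpseries (toC (PS_derive (mobius_pow_coef t k))) z /\
  Cpseries (toC (PS_derive (mobius_pow_coef t k))) z
    = (RtoC (INR k) * Cpow (mobius t z) (k - 1) * mobius_deriv t z)%C.
Proof.
  induction k as [|k [IHex IHval]].
  - assert (E0 : forall j, toC (PS_derive (mobius_pow_coef t 0)) j = RtoC 0)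
      by (intros j; unfold toC, PS_derive; simpl mobius_pow_coef; rewrite delta_neq by lia; f_equal; ring).
    split.
    + eapply ex_Cpseries_ext; [intros j; symmetry; apply E0|].
      apply ex_Cpseries_bounded; auto. intros j. rewrite Cmod_0. lra.
    + unfold Cpseries. rewrite Cseries_zero; [simpl; Cring|]. intros j. rewrite E0. Cring.
  - destruct (Cpseries_mobius_pow_coef k) as [Hex Hval].
    assert (E : forall j, toC (PS_derive (mobius_pow_coef t (S k))) j =
      (cprod (toC (PS_derive (mobius_pow_coef t k))) (toC (mobius_coef t)) j
       + cprod (toC (mobius_pow_coef t k)) (toC (PS_derive (mobius_coef t))) j)%C).
    { intros j. unfold toC at 1. simpl mobius_pow_coef.
      rewrite PS_derive_mult, RtoC_plus, <- !toC_PS_mult. reflexivity. }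
    split.
    + eapply ex_Cpseries_ext; [intros j; symmetry; apply E|].
      apply ex_Cpseries_plus; apply ex_Cpseries_cprod;
        auto using ex_Cpseries_mobius_coef, ex_Cpseries_PS_derive_mobius_coef.
    + rewrite (Cpseries_ext _ _ z E), Cpseries_plus, !Cpseries_cprod, IHval, Hval,
        Cpseries_mobius_coef, Cpseries_PS_derive_mobius_coef
        by auto using ex_Cpseries_cprod, ex_Cpseries_mobius_coef, ex_Cpseries_PS_derive_mobius_coef.
      destruct k as [|k]; [simpl; Cring|].
      replace (S (S k) - 1)%nat with (S k) by lia. replace (S k - 1)%nat with k by lia.
      rewrite (S_INR (S k)), RtoC_plus. simpl Cpow. Cring.
Qed.

Lemma mobius_hyperbolic_isometry :
  Cmod (mobius t z) < 1 /\ (1 - Cmod z ^ 2) * Cmod (mobius_deriv t z) = 1 - Cmod (mobius t z) ^ 2.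
Proof.
  assert (Hn := mobius_denom_neq0 t z Ht Hz).
  assert (HA : 0 < Cmod (RtoC 1 + RtoC t * z)%C) by (apply Cmod_gt_0; auto).
  set (A := Cmod (RtoC 1 + RtoC t * z)%C) in *.
  set (B := Cmod (z + RtoC t)%C).
  assert (Key : A ^ 2 - B ^ 2 = (1 - t ^ 2) * (1 - Cmod z ^ 2)).
  { unfold A, B. rewrite !Cmod2_alt. destruct z as [x y]. simpl. ring. }
  assert (E1 : Cmod (mobius t z) = B / A) by (unfold mobius; rewrite Cmod_div by auto; reflexivity).
  assert (Ht2 : t ^ 2 < 1) by (destruct (Rabs_def2 _ _ Ht); nra).
  assert (E2 : Cmod (mobius_deriv t z) = (1 - t ^ 2) / (A * A)).
  { unfold mobius_deriv. rewrite Cmod_div, Cmod_mult, Cmod_R, Rabs_pos_eq by (auto using Cmult_neq_0; lra).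
    reflexivity. }
  assert (Hz2 : Cmod z ^ 2 < 1) by (generalize (Cmod_ge_0 z); nra).
  assert (HB : 0 <= B) by apply Cmod_ge_0.
  split.
  - rewrite E1. apply Rmult_lt_reg_r with A; auto. unfold Rdiv.
    rewrite Rmult_assoc, Rinv_l by lra. nra.
  - rewrite E1, E2. apply (Rmult_eq_reg_r (A * A)); [|nra]. field_simplify; lra.
Qed.

End Mobius.

(** * Composing a polynomial with a disc automorphism *)

Lemma admissible_deriv_le b x : admissible b -> Cmod x < 1 -> (1 - Cmod x ^ 2) * Cmod (fderiv b x) <= 1.
Proof.
  intros [_ [Hb0 Hnorm]] Hx. unfold bloch_norm in Hnorm. rewrite Hb0, Cmod_0, Rbar_plus_0_l in Hnorm.
  destruct (Lub_Rbar_correct (fun r => exists z : C, Cmod z < 1 /\ r = (1 - Cmod z ^ 2) * Cmod (fderiv b z)))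
    as [Hub _].
  exact (Rbar_le_trans _ _ (Finite 1) (Hub _ (ex_intro _ x (conj Hx eq_refl))) Hnorm).
Qed.

Lemma admissible_intro c : analytic_on_disc c -> c 0%nat = RtoC 0 ->
  (forall z, Cmod z < 1 -> (1 - Cmod z ^ 2) * Cmod (fderiv c z) <= 1) -> admissible c.
Proof.
  intros Han Hc0 Hder. split; [exact Han | split; [exact Hc0|]].
  unfold bloch_norm. rewrite Hc0, Cmod_0, Rbar_plus_0_l.
  apply Lub_Rbar_correct. intros r [z [Hz ->]]. exact (Hder z Hz).
Qed.

Definition poly_deriv (a : nat -> C) (N : nat) (w : C) : C :=
  sum_n (fun k => (RtoC (INR k) * a k * Cpow w (k - 1))%C) N.

(* Taylor coefficients of [p o mobius t - p t], where [p w = sum_(k <= N) a k w^k]. *)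
Definition compose_mobius (a : nat -> C) (N : nat) (t : R) (j : nat) : C :=
  match j with
  | 0%nat => RtoC 0
  | _ => sum_n (fun k => (a k * toC (mobius_pow_coef t k) j)%C) N
  end.

Section Compose.

Variables (a : nat -> C) (N : nat) (t : R).
Hypothesis Ht : Rabs t < 1.

Lemma analytic_compose_mobius : analytic_on_disc (compose_mobius a N t).
Proof.
  intros z Hz.
  assert (Hex : ex_Cpseries (fun j => sum_n (fun k => (a k * toC (mobius_pow_coef t k) j)%C) N) z).
  { apply ex_Cpseries_sum_n. intros k. apply ex_Cpseries_scal, Cpseries_mobius_pow_coef; auto. }
  eapply ex_series_Rabs_le; [|exact Hex].
  intros [|k]; rewrite Rabs_pos_eq, pow_n_Cpow by apply Cmod_ge_0; simpl.
  - rewrite Cmult_0_l, Cmod_0. apply Cmod_ge_0.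
  - lra.
Qed.

Lemma fderiv_compose_mobius z : Cmod z < 1 ->
  fderiv (compose_mobius a N t) z = (mobius_deriv t z * poly_deriv a N (mobius t z))%C.
Proof.
  intros Hz.
  assert (Hder : forall k, ex_Cpseries (fun j => (a k * toC (PS_derive (mobius_pow_coef t k)) j)%C) z)
    by (intros k; apply ex_Cpseries_scal, Cpseries_PS_derive_mobius_pow_coef; auto).
  set (u := fun k => (RtoC (INR k) * compose_mobius a N t k * pow_n z (k - 1))%C).
  assert (Hu : forall j, u (S j) =
    ((fun j => sum_n (fun k => (a k * toC (PS_derive (mobius_pow_coef t k)) j)%C) N) j * Cpow z j)%C).
  { intros j. unfold u. rewrite pow_n_Cpow. replace (S j - 1)%nat with j by lia. simpl compose_mobius.
    rewrite <- sum_n_Cmult_l, <- !sum_n_Cmult_r. apply sum_n_ext. intros k.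
    unfold toC, PS_derive. rewrite RtoC_mult. Cring. }
  assert (Hsum : Csummable u).
  { apply (proj2 (ex_series_incr_1 (fun k => Cmod (u k)))).
    eapply ex_series_ext; [|apply (ex_Cpseries_sum_n _ N z Hder)]. intros j. simpl. now rewrite Hu. }
  unfold fderiv. fold u. rewrite Cseries_incr_1, (Cseries_ext _ _ Hu) by exact Hsum.
  fold (Cpseries (fun j => sum_n (fun k => (a k * toC (PS_derive (mobius_pow_coef t k)) j)%C) N) z).
  rewrite Cpseries_sum_n by exact Hder.
  unfold u, poly_deriv. simpl. rewrite <- sum_n_Cmult_l, !Cmult_0_l, Cplus_0_l.
  apply sum_n_ext. intros k.
  rewrite Cpseries_scal by apply (Cpseries_PS_derive_mobius_pow_coef t z Ht Hz).
  rewrite (proj2 (Cpseries_PS_derive_mobius_pow_coef t z Ht Hz k)). Cring.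
Qed.

Lemma admissible_compose_mobius :
  (forall w, Cmod w < 1 -> (1 - Cmod w ^ 2) * Cmod (poly_deriv a N w) <= 1) ->
  admissible (compose_mobius a N t).
Proof.
  intros Hp. apply admissible_intro; [apply analytic_compose_mobius | reflexivity|].
  intros z Hz. rewrite fderiv_compose_mobius, Cmod_mult, <- Rmult_assoc by exact Hz.
  destruct (mobius_hyperbolic_isometry t z Ht Hz) as [Hw ->]. apply Hp, Hw.
Qed.

End Compose.

(** * First-order expansion of the coefficients of [mobius t ^ k] *)

Definition mobius_pow_lin (k j : nat) : R := INR k * (delta (k - 1) j - delta (S k) j).

Definition mobius_pow_rem (t : R) (k j : nat) : R :=
  mobius_pow_coef t k j - delta k j - t * mobius_pow_lin k j.

Definition shift (f : nat -> R) (m j : nat) : R := if Nat.leb m j then f (j - m)%nat else 0.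

(* [mobius_coef t = delta 1 + t * (delta 0 - delta 2) + t^2 * mobius_coef_rem t] *)
Definition mobius_coef_rem (t : R) (m : nat) : R :=
  match m with
  | 0%nat => 0
  | 1%nat => -1
  | 2%nat => t
  | S (S (S m')) => (1 - t ^ 2) * (-t) ^ m'
  end.

Lemma shift_lt (f : nat -> R) m j : (j < m)%nat -> shift f m j = 0.
Proof. intros H. unfold shift. destruct (Nat.leb_spec m j); auto; lia. Qed.

Lemma Rabs_shift_le (f : nat -> R) m j : (forall i, Rabs (f i) <= 1) -> Rabs (shift f m j) <= 1.
Proof. intros Hf. unfold shift. destruct (Nat.leb m j); [apply Hf | rewrite Rabs_R0; lra]. Qed.

Lemma Rabs_mobius_coef_rem_le t m : Rabs t <= 1 -> Rabs (mobius_coef_rem t m) <= 1.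
Proof.
  intros Ht. destruct m as [|[|[|m]]]; simpl; try (apply Rabs_le; lra); [lra|].
  rewrite Rabs_mult, <- RPow_abs, Rabs_Ropp.
  assert (Rabs (1 - t * (t * 1)) <= 1).
  { assert (Htt : t * t = Rabs t * Rabs t) by (rewrite <- Rabs_mult, Rabs_pos_eq; nra).
    apply Rabs_le. generalize (Rabs_pos t). nra. }
  assert (Rabs t ^ m <= 1) by (apply pow_le_1; split; [apply Rabs_pos | lra]).
  generalize (pow_le (Rabs t) m (Rabs_pos t)) (Rabs_pos (1 - t * (t * 1))). nra.
Qed.

Lemma shift_mobius_coef t m j : shift (mobius_coef t) m j =
  delta (S m) j + t * (delta m j - delta (S (S m)) j) + t ^ 2 * shift (mobius_coef_rem t) m j.
Proof.
  unfold shift. destruct (Nat.leb_spec m j).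
  - replace j with (m + (j - m))%nat by lia. replace (m + (j - m) - m)%nat with (j - m)%nat by lia.
    destruct (j - m)%nat as [|[|[|d]]].
    + rewrite Nat.add_0_r, delta_same, !delta_neq by lia. simpl. ring.
    + replace (m + 1)%nat with (S m) by lia. rewrite delta_same, !delta_neq by lia. simpl. ring.
    + replace (m + 2)%nat with (S (S m)) by lia. rewrite delta_same, !delta_neq by lia. simpl. ring.
    + rewrite !delta_neq by lia. simpl. ring.
  - rewrite !delta_neq by lia. ring.
Qed.

Lemma sum_f_R0_indicator (g : nat -> R) m N :
  sum_f_R0 (fun i => if Nat.eqb i m then g i else 0) N = if Nat.leb m N then g m else 0.
Proof.
  induction N as [|N IH]; [destruct m; reflexivity|].
  rewrite tech5, IH.
  destruct (Nat.leb_spec m N), (Nat.leb_spec m (S N)), (Nat.eqb_spec (S N) m);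
    subst; try lia; ring.
Qed.

Lemma sum_delta_mult m j (f : nat -> R) :
  sum_f_R0 (fun i => delta m i * f (j - i)%nat) j = shift f m j.
Proof.
  unfold shift. rewrite <- (sum_f_R0_indicator (fun i => f (j - i)%nat)).
  apply sum_eq. intros i _. unfold delta. destruct (Nat.eqb i m); ring.
Qed.

Lemma shift_mobius_coef_diff t m j :
  shift (mobius_coef t) m j - shift (mobius_coef t) (S (S m)) j - delta (S m) j + delta (S (S (S m))) j =
  t * (delta m j - 2 * delta (S (S m)) j + delta (S (S (S (S m)))) j)
  + t ^ 2 * (shift (mobius_coef_rem t) m j - shift (mobius_coef_rem t) (S (S m)) j).
Proof. rewrite !shift_mobius_coef. ring. Qed.

Lemma Rabs_shift_mobius_coef_diff_le t m j : Rabs t <= 1/4 ->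
  Rabs (shift (mobius_coef t) m j - shift (mobius_coef t) (S (S m)) j - delta (S m) j + delta (S (S (S m))) j)
  <= 5 * Rabs t.
Proof.
  intros Ht. rewrite shift_mobius_coef_diff.
  assert (Hd : Rabs (delta m j - 2 * delta (S (S m)) j + delta (S (S (S (S m)))) j) <= 4).
  { unfold Rminus. eapply Rle_trans; [apply Rabs_triang|].
    eapply Rle_trans; [apply Rplus_le_compat_r, Rabs_triang|].
    rewrite Rabs_Ropp, Rabs_mult, (Rabs_pos_eq 2) by lra.
    generalize (Rabs_delta_le m j) (Rabs_delta_le (S (S m)) j) (Rabs_delta_le (S (S (S (S m)))) j). lra. }
  assert (Hr : Rabs (shift (mobius_coef_rem t) m j - shift (mobius_coef_rem t) (S (S m)) j) <= 2).
  { unfold Rminus. eapply Rle_trans; [apply Rabs_triang|]. rewrite Rabs_Ropp.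
    assert (Hrem : forall i, Rabs (mobius_coef_rem t i) <= 1) by (intros; apply Rabs_mobius_coef_rem_le; lra).
    generalize (Rabs_shift_le _ m j Hrem) (Rabs_shift_le _ (S (S m)) j Hrem). lra. }
  eapply Rle_trans; [apply Rabs_triang|]. rewrite !Rabs_mult, <- RPow_abs.
  generalize (Rabs_pos t) (Rabs_pos (delta m j - 2 * delta (S (S m)) j + delta (S (S (S (S m)))) j))
    (Rabs_pos (shift (mobius_coef_rem t) m j - shift (mobius_coef_rem t) (S (S m)) j)).
  simpl. nra.
Qed.

Lemma pow_256_ge k j : (k <= S j)%nat -> 5 * (1 + 5 * INR k) * 2 ^ k <= 256 ^ S j.
Proof.
  intros Hk. destruct k as [|k].
  - apply Rle_trans with (256 ^ 1); [simpl; lra | apply Rle_pow; [lra | lia]].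
  - apply Rle_trans with (256 ^ S k); [clear Hk | apply Rle_pow; [lra | lia]].
    induction k as [|k IH]; [simpl; lra|].
    rewrite S_INR. simpl pow. simpl pow in IH.
    assert (H2 : 0 <= 2 ^ k) by (apply pow_le; lra). assert (Hk := pos_INR k).
    assert (5 * (1 + 5 * (INR (S k) + 1)) * (2 * (2 * 2 ^ k)) <= 12 * (5 * (1 + 5 * INR (S k)) * (2 * 2 ^ k)))
      by (rewrite S_INR; nra).
    assert (0 <= 256 ^ k) by (apply pow_le; lra). lra.
Qed.

Lemma sum_pow_256_conv_le j (c : nat -> R) : (forall m, 0 <= c m <= 1) -> c 0%nat <= 1/4 ->
  sum_f_R0 (fun i => 256 ^ S i * c (j - i)%nat) j <= 256 ^ S j * (1/4 + 1/255) - 256/255.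
Proof.
  intros Hc Hc0. induction j as [|j IH]; [simpl; lra|].
  rewrite decomp_sum by lia. simpl pred.
  rewrite (sum_eq (fun i => 256 ^ S (S i) * c (S j - S i)%nat) (fun i => 256 ^ S i * c (j - i)%nat * 256))
    by (intros i _; simpl; ring).
  rewrite <- scal_sum. replace (256 ^ S (S j)) with (256 * 256 ^ S j) by (simpl; ring).
  generalize (Hc (S j - 0)%nat). simpl (256 ^ 1). lra.
Qed.

Lemma Rabs_conv_mobius_coef_le t k j (d : nat -> R) : Rabs t <= 1/4 ->
  (forall i, Rabs (d i) <= t ^ 2 * 256 ^ S i / 2 ^ k) ->
  Rabs (sum_f_R0 (fun i => d i * mobius_coef t (j - i)%nat) j) <= t ^ 2 / 2 ^ k * (256 ^ S j * (1/4 + 1/255)).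
Proof.
  intros Ht Hd. assert (Hk : 0 < 2 ^ k) by (apply pow_lt; lra). assert (Ht2 : 0 <= t ^ 2) by nra.
  eapply Rle_trans; [apply sum_f_R0_triangle|].
  eapply Rle_trans;
    [apply (sum_Rle _ (fun i => 256 ^ S i * Rabs (mobius_coef t (j - i)%nat) * (t ^ 2 / 2 ^ k)))|].
  - intros i _. rewrite Rabs_mult.
    replace (256 ^ S i * Rabs (mobius_coef t (j - i)) * (t ^ 2 / 2 ^ k))
      with ((t ^ 2 * 256 ^ S i / 2 ^ k) * Rabs (mobius_coef t (j - i))) by (field; lra).
    apply Rmult_le_compat_r; [apply Rabs_pos | apply Hd].
  - rewrite <- scal_sum. apply Rmult_le_compat_l; [apply Rdiv_le_0_compat; lra|].
    eapply Rle_trans; [apply (sum_pow_256_conv_le j (fun m => Rabs (mobius_coef t m)))|].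
    + intros m. split; [apply Rabs_pos | apply Rabs_mobius_coef_le; lra].
    + simpl. lra.
    + lra.
Qed.

Definition mobius_pow_rem_src (t : R) (k j : nat) : R :=
  t ^ 2 * shift (mobius_coef_rem t) k j
  + t * INR k * (shift (mobius_coef t) (k - 1) j - shift (mobius_coef t) (S k) j - delta k j + delta (S (S k)) j).

Lemma mobius_pow_rem_src_lt t k j : (S j < k)%nat -> mobius_pow_rem_src t k j = 0.
Proof. intros H. unfold mobius_pow_rem_src. rewrite !shift_lt, !delta_neq by lia. ring. Qed.

Lemma Rabs_mobius_pow_rem_src_le t k j : Rabs t <= 1/4 ->
  Rabs (mobius_pow_rem_src t k j) <= t ^ 2 * (1 + 5 * INR k).
Proof.
  intros Ht. unfold mobius_pow_rem_src.
  assert (Htt : t ^ 2 = Rabs t * Rabs t) by (rewrite <- Rabs_mult, Rabs_pos_eq; nra).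
  assert (Hsrc : Rabs (t ^ 2 * shift (mobius_coef_rem t) k j) <= t ^ 2).
  { rewrite Rabs_mult, (Rabs_pos_eq (t ^ 2)) by nra.
    assert (Rabs (shift (mobius_coef_rem t) k j) <= 1)
      by (apply Rabs_shift_le; intros; apply Rabs_mobius_coef_rem_le; lra).
    generalize (Rabs_pos t). nra. }
  assert (Hlin : Rabs (t * INR k * (shift (mobius_coef t) (k - 1) j - shift (mobius_coef t) (S k) j
                  - delta k j + delta (S (S k)) j)) <= t ^ 2 * (5 * INR k)).
  { destruct k as [|k]; [simpl INR; rewrite Rmult_0_r, Rmult_0_l, Rabs_R0; lra|].
    replace (S k - 1)%nat with k by lia.
    rewrite !Rabs_mult, (Rabs_pos_eq (INR (S k))) by apply pos_INR.
    rewrite Htt. replace (Rabs t * Rabs t * (5 * INR (S k))) with (Rabs t * INR (S k) * (5 * Rabs t)) by ring.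
    apply Rmult_le_compat_l; [apply Rmult_le_pos; [apply Rabs_pos | apply pos_INR]|].
    apply Rabs_shift_mobius_coef_diff_le, Ht. }
  eapply Rle_trans; [apply Rabs_triang|]. lra.
Qed.

Lemma mobius_pow_rem_S t k j : mobius_pow_rem t (S k) j =
  mobius_pow_rem_src t k j + sum_f_R0 (fun i => mobius_pow_rem t k i * mobius_coef t (j - i)%nat) j.
Proof.
  unfold mobius_pow_rem at 1, mobius_pow_rem_src. simpl mobius_pow_coef. unfold PS_mult.
  rewrite (sum_eq _ (fun i => (delta k i * mobius_coef t (j - i)%nat
      + (delta (k - 1) i * mobius_coef t (j - i)%nat - delta (S k) i * mobius_coef t (j - i)%nat) * (t * INR k))
      + mobius_pow_rem t k i * mobius_coef t (j - i)%nat))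
    by (intros i _; unfold mobius_pow_rem, mobius_pow_lin; ring).
  rewrite plus_sum, plus_sum, <- scal_sum, minus_sum, !sum_delta_mult, (shift_mobius_coef t k j).
  unfold mobius_pow_lin. simpl (S k - 1)%nat. rewrite Nat.sub_0_r, S_INR. ring.
Qed.

(* The constants are crude: only the factor [t ^ 2] and the decay in [k] matter. *)
Lemma Rabs_mobius_pow_rem_le t k j : Rabs t <= 1/4 ->
  Rabs (mobius_pow_rem t k j) <= t ^ 2 * 256 ^ S j / 2 ^ k.
Proof.
  intros Ht. assert (Ht2 : 0 <= t ^ 2) by nra. revert j. induction k as [|k IH]; intros j.
  - unfold mobius_pow_rem, mobius_pow_lin. simpl mobius_pow_coef. simpl INR.
    replace (delta 0 j - delta 0 j - t * (0 * (delta (0 - 1) j - delta 1 j))) with 0 by ring.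
    rewrite Rabs_R0. apply Rmult_le_pos; [apply Rmult_le_pos; [lra | apply pow_le; lra] | simpl; lra].
  - assert (Hk : 0 < 2 ^ k) by (apply pow_lt; lra).
    set (Y := 256 ^ S j). assert (HY : 0 < Y) by (apply pow_lt; lra).
    replace (t ^ 2 * Y / 2 ^ S k) with (t ^ 2 / 2 ^ k * (Y / 2)) by (simpl; field; lra).
    rewrite mobius_pow_rem_S. eapply Rle_trans; [apply Rabs_triang|].
    assert (Hconv := Rabs_conv_mobius_coef_le t k j _ Ht IH). fold Y in Hconv.
    assert (Hsrc : Rabs (mobius_pow_rem_src t k j) <= t ^ 2 / 2 ^ k * (Y / 5)).
    { destruct (Nat.lt_ge_cases (S j) k) as [Hlt | Hge].
      - rewrite mobius_pow_rem_src_lt, Rabs_R0 by exact Hlt. apply Rmult_le_pos; [|lra].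
        apply Rdiv_le_0_compat; lra.
      - eapply Rle_trans; [apply Rabs_mobius_pow_rem_src_le; exact Ht|].
        assert (Hpow := pow_256_ge k j Hge). fold Y in Hpow.
        replace (t ^ 2 / 2 ^ k * (Y / 5)) with (t ^ 2 * (Y / (5 * 2 ^ k))) by (field; lra).
        apply Rmult_le_compat_l; [lra|]. apply Rle_div_r; [lra|]. lra. }
    assert (0 <= t ^ 2 / 2 ^ k) by (apply Rdiv_le_0_compat; lra).
    assert (t ^ 2 / 2 ^ k * (Y / 5) + t ^ 2 / 2 ^ k * (Y * (1/4 + 1/255)) <= t ^ 2 / 2 ^ k * (Y / 2)).
    { rewrite <- Rmult_plus_distr_l. apply Rmult_le_compat_l; lra. }
    lra.
Qed.

(** * The energy of [compose_mobius] to first order in [t] *)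

Definition Cdot (x y : C) : R := fst x * fst y + snd x * snd y.

Lemma Cdot_plus_r x y z : Cdot x (y + z)%C = Cdot x y + Cdot x z.
Proof. destruct x, y, z. unfold Cdot. simpl. ring. Qed.

Lemma Cdot_scal (al be : R) x y : Cdot (RtoC al * x)%C (RtoC be * y)%C = al * be * Cdot x y.
Proof. destruct x, y. unfold Cdot. simpl. ring. Qed.

Lemma Cdot_scal_r (be : R) x y : Cdot x (RtoC be * y)%C = be * Cdot x y.
Proof. destruct x, y. unfold Cdot. simpl. ring. Qed.

Lemma Cdot_ge x y : - (Cmod x * Cmod y) <= Cdot x y.
Proof.
  assert (Hsq : Cdot x y ^ 2 <= (Cmod x * Cmod y) ^ 2).
  { rewrite Rpow_mult_distr, !Cmod2_alt. destruct x as [x1 x2], y as [y1 y2]. unfold Cdot, Re, Im. simpl.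
    assert (0 <= (x1 * y2 - x2 * y1) ^ 2) by apply pow2_ge_0. nra. }
  assert (0 <= Cmod x * Cmod y) by (apply Rmult_le_pos; apply Cmod_ge_0).
  nra.
Qed.

Lemma Cmod_plus_sqr_ge x y : Cmod x ^ 2 + 2 * Cdot x y <= Cmod (x + y)%C ^ 2.
Proof. destruct x as [x1 x2], y as [y1 y2]. rewrite !Cmod2_alt. unfold Cdot, Re, Im. simpl. nra. Qed.

Lemma sum_n_Cindicator (g : nat -> C) m N :
  sum_n (fun k => if Nat.eqb k m then g k else RtoC 0) N = if Nat.leb m N then g m else RtoC 0.
Proof.
  induction N as [|N IH]; [rewrite sum_O; destruct m; reflexivity|].
  rewrite sum_Sn, IH. change plus with Cplus.
  destruct (Nat.leb_spec m N), (Nat.leb_spec m (S N)), (Nat.eqb_spec (S N) m);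
    subst; try lia; Cring.
Qed.

(* The derivative in [t] at [t = 0] of the [j]-th coefficient of [compose_mobius a N t]. *)
Definition first_variation (a : nat -> C) (j : nat) : C :=
  (RtoC (INR (S j)) * a (S j) - RtoC (INR (j - 1)) * a (j - 1)%nat)%C.

Lemma compose_mobius_expand a N t j : (1 <= j)%nat -> (S j <= N)%nat ->
  compose_mobius a N t j =
  (a j + (RtoC t * first_variation a j + sum_n (fun k => (a k * RtoC (mobius_pow_rem t k j))%C) N))%C.
Proof.
  intros Hj HN. destruct j as [|j']; [lia|]. simpl compose_mobius. set (j := S j').
  rewrite (sum_n_ext _ (fun k => ((if Nat.eqb k j then a k else RtoC 0)
    + (RtoC t * ((if Nat.eqb k (S j) then RtoC (INR k) * a k else RtoC 0)
                 + (if Nat.eqb k (j - 1) then - (RtoC (INR k) * a k) else RtoC 0))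
    + a k * RtoC (mobius_pow_rem t k j)))%C)).
  - rewrite !(sum_n_plus (G := C_AbelianMonoid)), sum_n_Cmult_l, (sum_n_plus (G := C_AbelianMonoid)).
    rewrite !sum_n_Cindicator, !(proj2 (Nat.leb_le _ N)) by lia.
    unfold first_variation. change plus with Cplus. Cring.
  - intros k. unfold toC.
    replace (mobius_pow_coef t k j) with (delta k j + t * mobius_pow_lin k j + mobius_pow_rem t k j)
      by (unfold mobius_pow_rem; ring).
    unfold mobius_pow_lin. rewrite !RtoC_plus, !RtoC_mult, RtoC_minus.
    destruct (Nat.eqb_spec k j) as [E1|E1].
    + subst k. rewrite delta_same, (delta_neq (j - 1)), (delta_neq (S j)) by lia.
      destruct (Nat.eqb_spec j (S j)); [lia|]. destruct (Nat.eqb_spec j (j - 1)); [lia|]. Cring.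
    + rewrite (delta_neq k j) by lia. destruct (Nat.eqb_spec k (S j)) as [E2|E2].
      * subst k. simpl (S j - 1)%nat. rewrite delta_same, (delta_neq (S (S j))) by lia.
        destruct (Nat.eqb_spec (S j) (j - 1)); [lia|]. Cring.
      * rewrite (delta_neq (k - 1) j) by lia. destruct (Nat.eqb_spec k (j - 1)) as [E3|E3].
        -- replace (S k) with j by lia. rewrite delta_same. Cring.
        -- rewrite (delta_neq (S k) j) by lia. Cring.
Qed.

Lemma sum_first_variation (a : nat -> C) n :
  sum_n (fun j => INR j * Cdot (a j) (first_variation a j)) n = INR n * INR (S n) * Cdot (a n) (a (S n)).
Proof.
  induction n as [|n IH]; [rewrite sum_O; simpl; ring|].
  rewrite sum_Sn, IH. change plus with Rplus. unfold first_variation. simpl (S n - 1)%nat.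
  rewrite Nat.sub_0_r. destruct (a n), (a (S n)), (a (S (S n))). unfold Cdot, Rminus. simpl. ring.
Qed.

Lemma Cmod_sum_mobius_pow_rem_le a N t j Sh : Rabs t <= 1/4 ->
  (forall M, sum_n (fun k => Cmod (a k) / 2 ^ k) M <= Sh) ->
  Cmod (sum_n (fun k => (a k * RtoC (mobius_pow_rem t k j))%C) N) <= t ^ 2 * 256 ^ S j * Sh.
Proof.
  intros Ht HSh. eapply Rle_trans; [apply Cmod_sum_n_le|]. rewrite sum_n_Reals.
  eapply Rle_trans; [apply (sum_Rle _ (fun k => Cmod (a k) / 2 ^ k * (t ^ 2 * 256 ^ S j)))|].
  - intros k _. rewrite Cmod_mult, Cmod_R.
    replace (Cmod (a k) / 2 ^ k * (t ^ 2 * 256 ^ S j)) with (Cmod (a k) * (t ^ 2 * 256 ^ S j / 2 ^ k))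
      by (field; apply pow_nonzero; lra).
    apply Rmult_le_compat_l; [apply Cmod_ge_0 | apply Rabs_mobius_pow_rem_le, Ht].
  - rewrite <- scal_sum, <- sum_n_Reals. apply Rmult_le_compat_l; [|apply HSh].
    apply Rmult_le_pos; [nra | apply pow_le; lra].
Qed.

Lemma Cmod_compose_mobius_sqr_ge a N t j Sh : (1 <= j)%nat -> (S j <= N)%nat -> Rabs t <= 1/4 ->
  (forall M, sum_n (fun k => Cmod (a k) / 2 ^ k) M <= Sh) ->
  Cmod (a j) ^ 2 + 2 * t * Cdot (a j) (first_variation a j) - 2 * t ^ 2 * Sh * Cmod (a j) * 256 ^ S j
  <= Cmod (compose_mobius a N t j) ^ 2.
Proof.
  intros Hj HN Ht HSh. rewrite compose_mobius_expand by auto.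
  set (d := sum_n (fun k => (a k * RtoC (mobius_pow_rem t k j))%C) N).
  assert (Hd : Cmod d <= t ^ 2 * 256 ^ S j * Sh) by (apply Cmod_sum_mobius_pow_rem_le; auto).
  generalize (Cmod_plus_sqr_ge (a j) (RtoC t * first_variation a j + d)%C).
  rewrite Cdot_plus_r, Cdot_scal_r.
  generalize (Cdot_ge (a j) d).
  assert (Cmod (a j) * Cmod d <= Cmod (a j) * (t ^ 2 * 256 ^ S j * Sh))
    by (apply Rmult_le_compat_l; auto using Cmod_ge_0).
  lra.
Qed.

Lemma partial_energy_compose_mobius_ge n N a t Sh : (S n <= N)%nat -> Rabs t <= 1/4 ->
  (forall M, sum_n (fun k => Cmod (a k) / 2 ^ k) M <= Sh) ->
  partial_energy n a + 2 * t * (INR n * INR (S n) * Cdot (a n) (a (S n)))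
  - t ^ 2 * (2 * Sh * sum_n (fun j => INR j * Cmod (a j) * 256 ^ S j) n)
  <= partial_energy n (compose_mobius a N t).
Proof.
  intros HN Ht HSh. unfold partial_energy. rewrite <- sum_first_variation, !sum_n_Reals.
  replace (sum_f_R0 (fun k => INR k * Cmod (a k) ^ 2) n
           + 2 * t * sum_f_R0 (fun j => INR j * Cdot (a j) (first_variation a j)) n
           - t ^ 2 * (2 * Sh * sum_f_R0 (fun j => INR j * Cmod (a j) * 256 ^ S j) n))
    with (sum_f_R0 (fun j => INR j * Cmod (a j) ^ 2 + INR j * Cdot (a j) (first_variation a j) * (2 * t)
                             - INR j * Cmod (a j) * 256 ^ S j * (t ^ 2 * (2 * Sh))) n)
    by (rewrite minus_sum, plus_sum, <- !scal_sum; ring).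
  apply sum_Rle. intros [|j] Hj; [simpl INR; lra|].
  generalize (Cmod_compose_mobius_sqr_ge a N t (S j) Sh ltac:(lia) ltac:(lia) Ht HSh).
  assert (Hj0 := pos_INR (S j)).
  intros Hsq. apply Rmult_le_compat_l with (r := INR (S j)) in Hsq; [|exact Hj0]. lra.
Qed.

(** * Dilating and truncating an admissible function *)

Lemma ex_series_Cmod_half b : analytic_on_disc b -> ex_series (fun k => Cmod (b k) / 2 ^ k).
Proof.
  intros Ha. assert (Hh : Cmod (RtoC (1/2)) < 1) by (rewrite Cmod_R, Rabs_pos_eq; lra).
  eapply ex_series_ext; [|apply (Ha _ Hh)]. intros k. simpl.
  rewrite pow_n_Cpow, Cmod_mult, Cmod_pow, Cmod_R, Rabs_pos_eq by lra.
  unfold Rdiv. f_equal. rewrite Rmult_1_l. apply pow_inv.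
Qed.

Lemma ex_series_deriv_geom (q : R) : 0 <= q < 1 -> ex_series (fun k => INR k * q ^ (k - 1)).
Proof.
  intros Hq. apply (ex_series_incr_1 (fun k => INR k * q ^ (k - 1))).
  exists (/ (1 - q) * / (1 - q)).
  eapply is_series_ext; [|apply (is_series_mult_pos (fun k => q ^ k) (fun k => q ^ k))].
  - intros k. simpl (S k - 1)%nat. rewrite Nat.sub_0_r, <- sum_n_Reals.
    rewrite (sum_n_ext_loc _ (fun _ => q ^ k)); [apply sum_n_const|].
    intros i Hi. rewrite <- pow_add. f_equal. lia.
  - apply is_series_geom. rewrite Rabs_pos_eq; lra.
  - apply is_series_geom. rewrite Rabs_pos_eq; lra.
  - intros; apply pow_le; lra.
  - intros; apply pow_le; lra.
Qed.

Definition deriv_majorant (b : nat -> C) (rho : R) (k : nat) : R := INR k * Cmod (b k) * rho ^ (k - 1).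

Lemma deriv_majorant_ge0 b rho k : 0 <= rho -> 0 <= deriv_majorant b rho k.
Proof.
  intros Hrho. unfold deriv_majorant.
  apply Rmult_le_pos; [apply Rmult_le_pos; [apply pos_INR | apply Cmod_ge_0] | apply pow_le, Hrho].
Qed.

(* Cauchy's estimate: the coefficients are bounded on a larger circle of radius [(1 + r) / 2]. *)
Lemma ex_series_deriv_majorant b r : analytic_on_disc b -> 0 <= r < 1 -> ex_series (deriv_majorant b r).
Proof.
  intros Ha Hr. set (rho := (1 + r) / 2).
  assert (Hrho0 : 0 < rho) by (unfold rho; lra).
  assert (Hrho : Cmod (RtoC rho) < 1) by (rewrite Cmod_R, Rabs_pos_eq; unfold rho; lra).
  set (Mb := Series (fun k => Cmod (b k * pow_n (RtoC rho) k)%C)).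
  assert (HM : forall k, Cmod (b k) * rho ^ k <= Mb).
  { intros k. replace (Cmod (b k) * rho ^ k) with (Cmod (b k * pow_n (RtoC rho) k)%C)
      by (rewrite pow_n_Cpow, Cmod_mult, Cmod_pow, Cmod_R, Rabs_pos_eq; lra).
    apply (le_Series (fun k => Cmod (b k * pow_n (RtoC rho) k)%C)); [intros; apply Cmod_ge_0 | auto]. }
  set (q := r / rho).
  assert (Hq : 0 <= q < 1).
  { assert (q * rho = r) by (unfold q; field; lra).
    split; [apply Rdiv_le_0_compat; lra | unfold rho in *; nra]. }
  apply (ex_series_Rabs_le _ (fun k => Mb / rho * (INR k * q ^ (k - 1)))).
  - intros [|k]; rewrite Rabs_pos_eq by (apply deriv_majorant_ge0; lra); unfold deriv_majorant; [simpl; lra|].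
    simpl (S k - 1)%nat. rewrite Nat.sub_0_r.
    replace r with (q * rho) by (unfold q; field; lra). rewrite Rpow_mult_distr.
    assert (Hb : Cmod (b (S k)) * rho ^ k <= Mb / rho).
    { apply (Rmult_le_reg_l rho); auto. replace (rho * (Mb / rho)) with Mb by (field; lra).
      generalize (HM (S k)). simpl pow. lra. }
    assert (0 <= INR (S k) * q ^ k) by (apply Rmult_le_pos; [apply pos_INR | apply pow_le; lra]).
    replace (INR (S k) * Cmod (b (S k)) * (q ^ k * rho ^ k))
      with ((INR (S k) * q ^ k) * (Cmod (b (S k)) * rho ^ k)) by ring.
    rewrite (Rmult_comm (Mb / rho)). apply Rmult_le_compat_l; auto.
  - apply (ex_series_scal_l (Mb / rho) (fun k => INR k * q ^ (k - 1))). apply ex_series_deriv_geom, Hq.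
Qed.

Definition trunc_err (b : nat -> C) (rho : R) (N : nat) : R :=
  2 * (Series (deriv_majorant b rho) - sum_n (deriv_majorant b rho) N).

Lemma trunc_err_ge0 b r N : analytic_on_disc b -> 0 <= r < 1 -> 0 <= trunc_err b r N.
Proof.
  intros Ha Hr. assert (HW := ex_series_deriv_majorant b r Ha Hr).
  unfold trunc_err. rewrite Series_minus_sum_n by exact HW.
  apply Rmult_le_pos; [lra|]. apply Series_nonneg.
  - intros; apply deriv_majorant_ge0; lra.
  - apply (ex_series_incr_n (deriv_majorant b r) (S N)), HW.
Qed.

Lemma trunc_err_small b r eta : analytic_on_disc b -> 0 <= r < 1 -> 0 < eta ->
  forall n0, exists N, (n0 <= N)%nat /\ trunc_err b r N <= eta.
Proof.
  intros Ha Hr Heta n0.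
  assert (H : is_lim_seq (sum_n (deriv_majorant b r)) (Series (deriv_majorant b r)))
    by apply (Series_correct _ (ex_series_deriv_majorant b r Ha Hr)).
  apply is_lim_seq_spec in H. destruct (H (mkposreal (eta / 2) ltac:(lra))) as [N0 HN0].
  exists (max n0 N0). split; [lia|].
  assert (Hh := HN0 (max n0 N0) ltac:(lia)). simpl in Hh. apply Rabs_def2 in Hh.
  unfold trunc_err. lra.
Qed.

Lemma dilate_weight_le rho s : 0 <= rho <= 1 -> 0 <= s < 1 -> (1 - s ^ 2) * rho <= 1 - (rho * s) ^ 2.
Proof. intros Hrho Hs. assert (0 <= (1 - rho) * (1 + rho * s ^ 2)) by (apply Rmult_le_pos; nra). nra. Qed.

Lemma poly_deriv_dilate b zeta N w :
  poly_deriv (fun k => (b k * Cpow zeta k)%C) N w =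
  (zeta * sum_n (fun k => (RtoC (INR k) * b k * Cpow (zeta * w) (k - 1))%C) N)%C.
Proof.
  unfold poly_deriv. rewrite <- sum_n_Cmult_l. apply sum_n_ext. intros [|k]; [simpl; Cring|].
  replace (S k - 1)%nat with k by lia. rewrite Cpow_mult_l. simpl Cpow. Cring.
Qed.

Lemma Cmod_deriv_trunc_le b x rho N : analytic_on_disc b -> Cmod x <= rho < 1 ->
  Cmod (sum_n (fun k => (RtoC (INR k) * b k * Cpow x (k - 1))%C) N) <= Cmod (fderiv b x) + trunc_err b rho N.
Proof.
  intros Hb Hx.
  set (u := fun k => (RtoC (INR k) * b k * pow_n x (k - 1))%C).
  set (W := deriv_majorant b rho).
  assert (HuW : forall k, Cmod (u k) <= W k).
  { intros k. unfold u, W, deriv_majorant.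
    rewrite pow_n_Cpow, !Cmod_mult, Cmod_R, Cmod_pow, Rabs_pos_eq by apply pos_INR.
    apply Rmult_le_compat_l; [apply Rmult_le_pos; [apply pos_INR | apply Cmod_ge_0]|].
    apply pow_incr. split; [apply Cmod_ge_0 | lra]. }
  assert (HW : ex_series W) by (apply ex_series_deriv_majorant; [exact Hb | generalize (Cmod_ge_0 x); lra]).
  assert (Hu : Csummable u) by (apply (Csummable_le _ W); auto).
  replace (sum_n (fun k => (RtoC (INR k) * b k * Cpow x (k - 1))%C) N) with (sum_n u N)
    by (apply sum_n_ext; intros; unfold u; now rewrite pow_n_Cpow).
  replace (sum_n u N) with (Cseries u + - (Cseries u - sum_n u N))%C by Cring.
  eapply Rle_trans; [apply Cmod_triangle|]. rewrite Cmod_opp. apply Rplus_le_compat_l.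
  eapply Rle_trans; [apply Cmod_Cseries_minus_sum_n; auto|]. apply Rmult_le_compat_l; [lra|].
  rewrite !Series_minus_sum_n by auto. apply Series_le.
  - intros k. split; [apply Cmod_ge_0 | apply HuW].
  - apply (ex_series_incr_n W (S N)); auto.
Qed.

Lemma dilated_trunc_Bloch_le b (zeta w : C) N : admissible b -> Cmod zeta < 1 -> Cmod w < 1 ->
  (1 - Cmod w ^ 2) * Cmod (poly_deriv (fun k => (b k * Cpow zeta k)%C) N w) <= 1 + trunc_err b (Cmod zeta) N.
Proof.
  intros Hb Hz Hw. set (x := (zeta * w)%C).
  assert (Hxz : Cmod x = Cmod zeta * Cmod w) by apply Cmod_mult.
  generalize (Cmod_ge_0 zeta) (Cmod_ge_0 w). intros Hz0 Hw0.
  assert (Hx : Cmod x < 1) by (rewrite Hxz; nra).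
  assert (Htrunc := Cmod_deriv_trunc_le b x (Cmod zeta) N (proj1 Hb) ltac:(rewrite Hxz; split; nra)).
  assert (Hder := admissible_deriv_le b x Hb Hx). rewrite Hxz in Hder.
  assert (Hweight := dilate_weight_le (Cmod zeta) (Cmod w) ltac:(lra) ltac:(lra)).
  assert (Herr := trunc_err_ge0 b (Cmod zeta) N (proj1 Hb) ltac:(lra)).
  rewrite poly_deriv_dilate, Cmod_mult, <- Rmult_assoc. fold x.
  set (D := Cmod (sum_n (fun k => (RtoC (INR k) * b k * Cpow x (k - 1))%C) N)) in *.
  set (F := Cmod (fderiv b x)) in *. assert (0 <= F) by apply Cmod_ge_0.
  assert (Hw2 : 0 <= Cmod w ^ 2 <= 1) by (simpl; split; nra).
  assert (0 <= (1 - Cmod w ^ 2) * Cmod zeta <= 1) by (split; nra).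
  assert ((1 - Cmod w ^ 2) * Cmod zeta * D <= (1 - Cmod w ^ 2) * Cmod zeta * (F + trunc_err b (Cmod zeta) N))
    by (apply Rmult_le_compat_l; lra).
  assert ((1 - Cmod w ^ 2) * Cmod zeta * F <= (1 - (Cmod zeta * Cmod w) ^ 2) * F)
    by (apply Rmult_le_compat_r; auto).
  assert ((1 - Cmod w ^ 2) * Cmod zeta * trunc_err b (Cmod zeta) N <= trunc_err b (Cmod zeta) N) by nra.
  lra.
Qed.

(** * The first variation of an extremal function *)

Lemma partial_energy_nonneg n c : 0 <= partial_energy n c.
Proof.
  unfold partial_energy. rewrite sum_n_Reals. apply cond_pos_sum. intros k.
  apply Rmult_le_pos; [apply pos_INR | apply pow_le, Cmod_ge_0].
Qed.

Lemma partial_energy_le_extremal n b c :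
  Finite (partial_energy n b) = M n -> admissible c -> partial_energy n c <= partial_energy n b.
Proof.
  intros Hext Hc.
  destruct (Lub_Rbar_correct (fun r => exists c, admissible c /\ r = partial_energy n c)) as [Hub _].
  assert (H := Hub (partial_energy n c) (ex_intro _ c (conj Hc eq_refl))).
  fold (M n) in H. rewrite <- Hext in H. exact H.
Qed.

Lemma partial_energy_scale_ge n b c s r : 0 <= r <= 1 -> (forall k, Cmod (c k) = s * r ^ k * Cmod (b k)) ->
  (s * r ^ n) ^ 2 * partial_energy n b <= partial_energy n c.
Proof.
  intros Hr Hc. unfold partial_energy. rewrite !sum_n_Reals, scal_sum. apply sum_Rle. intros j Hj.
  rewrite Hc.
  assert (Hrj : r ^ n <= r ^ j) by (apply pow_le_decr; auto).
  assert (0 <= r ^ n) by (apply pow_le; lra).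
  assert (0 <= INR j * Cmod (b j) ^ 2) by (apply Rmult_le_pos; [apply pos_INR | apply pow_le, Cmod_ge_0]).
  replace (INR j * (s * r ^ j * Cmod (b j)) ^ 2) with (INR j * Cmod (b j) ^ 2 * s ^ 2 * (r ^ j) ^ 2) by ring.
  replace (INR j * Cmod (b j) ^ 2 * (s * r ^ n) ^ 2) with (INR j * Cmod (b j) ^ 2 * s ^ 2 * (r ^ n) ^ 2) by ring.
  apply Rmult_le_compat_l; [apply Rmult_le_pos; [auto | nra] | nra].
Qed.

Lemma le_of_le_plus_eta A B C : 0 <= C -> (forall eta, 0 < eta < 1 -> A <= B + C * eta) -> A <= B.
Proof.
  intros HC H. apply Rle_plus_epsilon. intros eps Heps.
  set (eta := Rmin (1/2) (eps / (C + 1))).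
  assert (Heta : 0 < eta) by (apply Rmin_glb_lt; [lra | apply Rdiv_lt_0_compat; lra]).
  assert (Heta1 : eta <= 1/2) by apply Rmin_l.
  assert (Heta2 : eta <= eps / (C + 1)) by apply Rmin_r.
  assert (C * eta <= (C + 1) * (eps / (C + 1))) by (apply Rmult_le_compat; lra).
  replace ((C + 1) * (eps / (C + 1))) with eps in * by (field; lra).
  generalize (H eta ltac:(lra)). lra.
Qed.

Lemma pow_ge_lin c r m : 0 <= r <= 1 -> c - Rabs c * (INR m * (1 - r)) <= c * r ^ m.
Proof.
  intros Hr. assert (Hm : 0 <= INR m) by apply pos_INR.
  assert (Hb : 1 - INR m * (1 - r) <= r ^ m).
  { induction m as [|m IH]; [simpl; lra|]. rewrite S_INR. simpl pow.
    assert (r ^ m <= 1) by (apply pow_le_1; lra). assert (0 <= r ^ m) by (apply pow_le; lra).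
    assert (IH' := IH (pos_INR m)). nra. }
  assert (r ^ m <= 1) by (apply pow_le_1; lra).
  destruct (Rle_dec 0 c).
  - rewrite Rabs_pos_eq by auto.
    assert (c * (1 - INR m * (1 - r)) <= c * r ^ m) by (apply Rmult_le_compat_l; auto). lra.
  - rewrite Rabs_left by lra. assert (0 <= INR m * (1 - r)) by (apply Rmult_le_pos; lra). nra.
Qed.

Lemma linear_le_quadratic_eq0 X K : 0 <= K -> (forall t, Rabs t <= 1/4 -> 2 * t * X <= t ^ 2 * K) -> X = 0.
Proof.
  intros HK H. destruct (Req_dec X 0) as [|HX]; auto. exfalso.
  set (m := Rmin (1/4) (Rabs X / (K + 1))).
  assert (HaX : 0 < Rabs X) by (apply Rabs_pos_lt; auto).
  assert (Hm0 : 0 < m) by (apply Rmin_glb_lt; [lra | apply Rdiv_lt_0_compat; lra]).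
  assert (Hm1 : m <= 1/4) by apply Rmin_l.
  assert (Hm2 : m <= Rabs X / (K + 1)) by apply Rmin_r.
  assert (Hm3 : m * K < Rabs X).
  { apply Rle_lt_trans with (Rabs X / (K + 1) * K); [apply Rmult_le_compat_r; auto|].
    apply (Rmult_lt_reg_r (K + 1)); [lra|].
    replace (Rabs X / (K + 1) * K * (K + 1)) with (Rabs X * K) by (field; lra). nra. }
  destruct (Rcase_abs X) as [Hn | Hp].
  - generalize (H (- m) ltac:(rewrite Rabs_Ropp, Rabs_pos_eq; lra)). rewrite Rabs_left in Hm3 by auto. nra.
  - generalize (H m ltac:(rewrite Rabs_pos_eq; lra)). rewrite Rabs_right in Hm3 by auto. nra.
Qed.

Lemma Series_Cmod_half_ge0 b : analytic_on_disc b -> 0 <= Series (fun k => Cmod (b k) / 2 ^ k).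
Proof.
  intros Ha. apply Series_nonneg; [|apply ex_series_Cmod_half, Ha].
  intros k. apply Rdiv_le_0_compat; [apply Cmod_ge_0 | apply pow_lt; lra].
Qed.

Lemma Cdot_dilate (lam r : R) om x y m :
  Cdot (RtoC lam * (x * Cpow (RtoC r * om) m))%C (RtoC lam * (y * Cpow (RtoC r * om) (S m)))%C
  = lam ^ 2 * r ^ (2 * m + 1) * Cdot (x * Cpow om m)%C (y * Cpow om (S m))%C.
Proof.
  rewrite !Cpow_mult_l, <- !RtoC_pow.
  replace (RtoC lam * (x * (RtoC (r ^ m) * Cpow om m)))%C
    with (RtoC (lam * r ^ m) * (x * Cpow om m))%C by (rewrite RtoC_mult; Cring).
  replace (RtoC lam * (y * (RtoC (r ^ S m) * Cpow om (S m))))%C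
    with (RtoC (lam * r ^ S m) * (y * Cpow om (S m)))%C by (rewrite RtoC_mult; Cring).
  rewrite Cdot_scal. replace (2 * m + 1)%nat with (m + S m)%nat by lia. rewrite pow_add. ring.
Qed.

Section Extremal.

Variables (n : nat) (b : nat -> C).
Hypotheses (Hb : admissible b) (Hext : Finite (partial_energy n b) = M n).

Let E := partial_energy n b.
Let Sh := Series (fun k => Cmod (b k) / 2 ^ k).
Let K := 2 * Sh * sum_n (fun j => INR j * Cmod (b j) * 256 ^ S j) n.

Lemma second_order_const_ge0 : 0 <= K.
Proof.
  unfold K. apply Rmult_le_pos; [generalize (Series_Cmod_half_ge0 b (proj1 Hb)); fold Sh; lra|].
  rewrite sum_n_Reals. apply cond_pos_sum. intros k.
  apply Rmult_le_pos; [apply Rmult_le_pos; [apply pos_INR | apply Cmod_ge_0] | apply pow_le; lra].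
Qed.

Lemma competitor_admissible zeta N t : Cmod zeta < 1 -> Rabs t < 1 ->
  admissible (compose_mobius (fun k => (RtoC (/ (1 + trunc_err b (Cmod zeta) N)) * (b k * Cpow zeta k))%C) N t).
Proof.
  intros Hz Ht. set (eps := trunc_err b (Cmod zeta) N).
  assert (Heps : 0 <= eps) by (apply trunc_err_ge0; [apply Hb | split; [apply Cmod_ge_0 | exact Hz]]).
  apply admissible_compose_mobius; auto. intros w Hw.
  unfold poly_deriv.
  rewrite (sum_n_ext _ (fun k =>
    (RtoC (/ (1 + eps)) * (RtoC (INR k) * (b k * Cpow zeta k) * Cpow w (k - 1)))%C)) by (intros; Cring).
  rewrite sum_n_Cmult_l, Cmod_mult, Cmod_R, Rabs_pos_eq by (apply Rlt_le, Rinv_0_lt_compat; lra).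
  fold (poly_deriv (fun k => (b k * Cpow zeta k)%C) N w).
  assert (Hbw := dilated_trunc_Bloch_le b zeta w N Hb Hz Hw). fold eps in Hbw.
  rewrite Rmult_comm, Rmult_assoc, (Rmult_comm _ (1 - Cmod w ^ 2)).
  apply Rle_trans with (/ (1 + eps) * (1 + eps)); [|right; field; lra].
  apply Rmult_le_compat_l; [apply Rlt_le, Rinv_0_lt_compat; lra | exact Hbw].
Qed.

Section Rotation.

Variables (om : C) (t : R).
Hypotheses (Hom : Cmod om = 1) (Ht : Rabs t <= 1/4).

Let X := INR n * INR (S n) * Cdot (b n * Cpow om n)%C (b (S n) * Cpow om (S n))%C.

Lemma energy_ineq_dilated_trunc r N : 0 < r < 1 -> (S n <= N)%nat ->
  (/ (1 + trunc_err b r N)) ^ 2 * (r ^ (2 * n) * E + 2 * t * r ^ (2 * n + 1) * X) <= E + t ^ 2 * K.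
Proof.
  intros Hr HN. set (zeta := (RtoC r * om)%C).
  assert (Hz : Cmod zeta = r) by (unfold zeta; rewrite Cmod_mult, Cmod_R, Hom, Rabs_pos_eq; lra).
  set (lam := / (1 + trunc_err b r N)).
  assert (Hlam : 0 < lam <= 1).
  { assert (0 <= trunc_err b r N) by (apply trunc_err_ge0; [apply Hb | lra]).
    unfold lam. split; [apply Rinv_0_lt_compat; lra|]. rewrite <- Rinv_1. apply Rinv_le_contravar; lra. }
  set (a := fun k => (RtoC lam * (b k * Cpow zeta k))%C).
  assert (Hca : forall k, Cmod (a k) = lam * r ^ k * Cmod (b k)).
  { intros k. unfold a. rewrite !Cmod_mult, Cmod_R, Cmod_pow, Hz, Rabs_pos_eq by lra. ring. }
  assert (Hab : forall k, Cmod (a k) <= Cmod (b k)).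
  { intros k. rewrite Hca. assert (r ^ k <= 1) by (apply pow_le_1; lra).
    assert (0 <= r ^ k) by (apply pow_le; lra). assert (lam * r ^ k <= 1) by nra.
    generalize (Cmod_ge_0 (b k)). nra. }
  assert (HSha : forall Mx, sum_n (fun k => Cmod (a k) / 2 ^ k) Mx <= Sh).
  { intros Mx. eapply Rle_trans; [|apply (sum_n_le_Series _ Mx)].
    - rewrite !sum_n_Reals. apply sum_Rle. intros k _. unfold Rdiv.
      apply Rmult_le_compat_r; [apply Rlt_le, Rinv_0_lt_compat, pow_lt; lra | apply Hab].
    - intros k. apply Rdiv_le_0_compat; [apply Cmod_ge_0 | apply pow_lt; lra].
    - apply ex_series_Cmod_half, Hb. }
  assert (Hcomp : partial_energy n (compose_mobius a N t) <= E).
  { apply partial_energy_le_extremal; auto. unfold a, lam. rewrite <- Hz. apply competitor_admissible; lra. }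
  assert (Henergy := partial_energy_compose_mobius_ge n N a t Sh HN Ht HSha).
  assert (Hscale : (lam * r ^ n) ^ 2 * E <= partial_energy n a)
    by (apply partial_energy_scale_ge; [lra | exact Hca]).
  assert (Hdot : INR n * INR (S n) * Cdot (a n) (a (S n)) = lam ^ 2 * r ^ (2 * n + 1) * X)
    by (unfold a, X, zeta; rewrite Cdot_dilate; ring).
  assert (Hcurv : t ^ 2 * (2 * Sh * sum_n (fun j => INR j * Cmod (a j) * 256 ^ S j) n) <= t ^ 2 * K).
  { apply Rmult_le_compat_l; [nra|]. unfold K.
    apply Rmult_le_compat_l; [generalize (Series_Cmod_half_ge0 b (proj1 Hb)); fold Sh; lra|].
    rewrite !sum_n_Reals. apply sum_Rle. intros j _.
    apply Rmult_le_compat_r; [apply pow_le; lra | apply Rmult_le_compat_l; [apply pos_INR | apply Hab]]. }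
  rewrite Hdot in Henergy.
  replace (lam ^ 2 * (r ^ (2 * n) * E + 2 * t * r ^ (2 * n + 1) * X))
    with ((lam * r ^ n) ^ 2 * E + 2 * t * (lam ^ 2 * r ^ (2 * n + 1) * X))
    by (replace (2 * n)%nat with (n + n)%nat by lia; rewrite !pow_add; ring).
  lra.
Qed.

Lemma energy_ineq_dilated r : 0 < r < 1 -> r ^ (2 * n) * E + 2 * t * r ^ (2 * n + 1) * X <= E + t ^ 2 * K.
Proof.
  intros Hr. set (A := r ^ (2 * n) * E + 2 * t * r ^ (2 * n + 1) * X).
  assert (HE : 0 <= E) by apply partial_energy_nonneg.
  assert (HB : 0 <= E + t ^ 2 * K) by (generalize second_order_const_ge0; nra).
  apply (le_of_le_plus_eta _ _ (3 * (E + t ^ 2 * K))); [lra|]. intros eta Heta.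
  destruct (trunc_err_small b r eta (proj1 Hb) ltac:(lra) ltac:(lra) (S n)) as [N [HN Heps]].
  assert (Heps0 : 0 <= trunc_err b r N) by (apply trunc_err_ge0; [apply Hb | lra]).
  set (eps := trunc_err b r N) in *.
  assert (Hlam := energy_ineq_dilated_trunc r N Hr HN). fold eps A in Hlam.
  destruct (Rle_dec A 0); [nra|].
  assert (HA : A = (1 + eps) ^ 2 * ((/ (1 + eps)) ^ 2 * A)) by (field; lra).
  assert ((1 + eps) ^ 2 <= 1 + 3 * eta) by nra.
  assert (A <= (1 + eps) ^ 2 * (E + t ^ 2 * K)) by (rewrite HA; apply Rmult_le_compat_l; [nra | exact Hlam]).
  assert ((1 + eps) ^ 2 * (E + t ^ 2 * K) <= (1 + 3 * eta) * (E + t ^ 2 * K)) by (apply Rmult_le_compat_r; auto).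
  lra.
Qed.

Lemma energy_ineq_first_order : 2 * t * X <= t ^ 2 * K.
Proof.
  assert (HE : 0 <= E) by apply partial_energy_nonneg.
  apply (le_of_le_plus_eta _ _ (E * INR (2 * n) + Rabs (2 * t * X) * INR (2 * n + 1))).
  { apply Rplus_le_le_0_compat; apply Rmult_le_pos; auto using pos_INR, Rabs_pos. }
  intros d Hd. assert (Hdil := energy_ineq_dilated (1 - d) ltac:(lra)).
  assert (H1 := pow_ge_lin E (1 - d) (2 * n) ltac:(lra)).
  assert (H2 := pow_ge_lin (2 * t * X) (1 - d) (2 * n + 1) ltac:(lra)).
  rewrite Rabs_pos_eq in H1 by exact HE.
  replace (1 - (1 - d)) with d in H1, H2 by ring.
  replace (2 * t * (1 - d) ^ (2 * n + 1) * X) with (2 * t * X * (1 - d) ^ (2 * n + 1)) in Hdil by ring.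
  lra.
Qed.

End Rotation.

Lemma extremal_Cdot_rotation_eq0 om : (1 <= n)%nat -> Cmod om = 1 ->
  Cdot (b n * Cpow om n)%C (b (S n) * Cpow om (S n))%C = 0.
Proof.
  intros Hn Hom.
  assert (HX := linear_le_quadratic_eq0 _ _ second_order_const_ge0
                  (fun t Ht => energy_ineq_first_order om t Hom Ht)).
  assert (Hnn : 0 < INR n * INR (S n)) by (apply Rmult_lt_0_compat; apply lt_0_INR; lia).
  apply Rmult_integral in HX. destruct HX as [HX | HX]; [lra | exact HX].
Qed.

End Extremal.

Lemma Cdot_mult_r x y u : Cdot (x * u)%C (y * u)%C = Cmod u ^ 2 * Cdot x y.
Proof. rewrite Cmod2_alt. destruct x, y, u. unfold Cdot, Re, Im. simpl. ring. Qed.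

Lemma Cdot_Ci_eq0 x y : Cdot x y = 0 -> Cdot x (y * Ci)%C = 0 -> x = RtoC 0 \/ y = RtoC 0.
Proof.
  intros H1 H2.
  assert (E : (Cmod x * Cmod y) ^ 2 = Cdot x y ^ 2 + Cdot x (y * Ci)%C ^ 2).
  { rewrite Rpow_mult_distr, !Cmod2_alt. destruct x, y. unfold Cdot, Re, Im. simpl. ring. }
  rewrite H1, H2 in E.
  assert (Cmod x * Cmod y = 0) by (simpl in E; nra).
  apply Rmult_integral in H. destruct H; [left | right]; apply Cmod_eq_0; auto.
Qed.

Theorem mainTheorem5 (n : nat) (b : nat -> C) :
  (1 <= n)%nat ->
  admissible b ->
  Finite (partial_energy n b) = M n ->
  b n = RtoC 0 \/ b (S n) = RtoC 0.
Proof.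
  intros Hn Hb Hext.
  assert (Hreal := extremal_Cdot_rotation_eq0 n b Hb Hext (RtoC 1) Hn Cmod_1).
  assert (Himag := extremal_Cdot_rotation_eq0 n b Hb Hext Ci Hn Cmod_Ci).
  rewrite !Cpow_1_l, !Cmult_1_r in Hreal.
  rewrite Cpow_S, Cmult_assoc, Cdot_mult_r, Cmod_pow, Cmod_Ci, !pow1, Rmult_1_l in Himag.
  apply Cdot_Ci_eq0; assumption.
Qed.
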